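(* Let $D$ be a subsemigroup of $(\mathbb N_0,+)$. (a) $h\notin\mathcal I_D$ if and only if $0\in D$. (b) $\{w\mid w\text{ bracket pattern},\ \mathrm{Br}_\bullet(w)\in\mathcal I_D\}=\mathfrak W_{D\cup\{0\}}$.
   Context: $\mathbb N=\{1,2,\dots\}$, $\mathbb N_0=\mathbb N\cup\{0\}$. A (two-colored) partition $p$ consists of two finite totally ordered sets $U$ (upper row, left to right) and $L$ (lower row), a decomposition of $U\sqcup L$ (the points) into non-empty pairwise disjoint blocks, and a coloring of each point by $\circ$ or $\bullet$. A pair partition has only two-point blocks. On the points of $p$ consider the cyclic order obtained by traversing the lower row left to right and then the upper row right to left. $]\alpha,\beta[$: points strictly after $\alpha$ and before $\beta$ in this cyclic order; $]\alpha,\beta]:=]\alpha,\beta[\cup\{\beta\}$ for $\alpha\ne\beta$, $]\alpha,\alpha]:=\emptyset$. Normalized color: the color for lower points, the opposite color for upper points. $\sigma_p(S)$ = #normalized-$\circ$ points of $S$ $-$ #normalized-$\bullet$ points of $S$. Distinct blocks $B,B'$ cross if there are $\alpha,\beta\in B,\gamma,\delta\in B'$ in cyclic order $\alpha,\gamma,\beta,\delta$. $\mathcal P^{\circ\bullet}_{2,\mathrm{nb}}$: pair partitions each block of which has one point of each normalized color. $\mathcal S_0$: those $p\in\mathcal P^{\circ\bullet}_{2,\mathrm{nb}}$ with $\sigma_p(]\alpha,\beta[)=0$ for all blocks $\{\alpha,\beta\}$. For $p\in\mathcal S_0$: $\delta_p(\alpha,\beta)=\sigma_p(]\alpha,\beta[)$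 for different normalized colors, $\sigma_p(]\alpha,\beta])$ for equal ones; $d_p(B,B')=|\delta_p(\alpha,\alpha')|$ for any $\alpha\in B,\alpha'\in B'$ (well defined). A subsemigroup of $(\mathbb N_0,+)$ is a possibly empty subset closed under addition. $\mathcal I_D$: all $p\in\mathcal S_0$ with $d_p(B,B')\notin D$ for all crossing blocks $B,B'$. $h$ is the partition with upper row $\circ\bullet\circ$ and lower row $\circ\bullet\circ$ whose blocks are $\{$1st lower, 3rd upper$\}$, $\{$2nd lower, 2nd upper$\}$, $\{$3rd lower, 1st upper$\}$. A bracket pattern is a non-empty finite subset $w\subseteq\mathbb N$; $\|w\|:=\max(w)$. Its completion is $A(w):=\{j-i\mid j\in w,\ i\in\mathbb N_0,\ i\notin w,\ i<j\}$. For a submonoid $M$ of $(\mathbb N_0,+)$, $\mathfrak W_M:=\{w\mid w\text{ bracket pattern},\ A(w)\subseteq\mathbb N_0\setminus M\}$. For a bracket pattern $w$ with $m=\|w\|$, $\mathrm{Br}_\bullet(w)$ is the partition whose lower row, left to right, is $b_m,\dots,b_1,b_0,c_0,c_1,\dots,c_m$ and upper row $b'_m,\dots,b'_0,c'_0,\dots,c'_m$, all $b_k,b'_k$ black and all $c_k,c'_k$ white, with blocks $\{b_k,c_k\},\{b'_k,c'_k\}$ for $k\in w$ and $\{b_k,b'_k\},\{c_k,c'_k\}$ for $0\le k\le m$, $k\notin w$. *)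

From mathcomp Require Import all_boot all_order all_algebra.
Set Implicit Arguments. Unset Strict Implicit. Unset Printing Implicit Defensive.
Import GRing.Theory Num.Theory.

(* A point: (false, i) = i-th lower point (0-indexed, left to right),
            (true, j)  = j-th upper point (0-indexed, left to right). *)
Definition pt := (bool * nat)%type.
Definition Lo (i : nat) : pt := (false, i).
Definition Up (j : nat) : pt := (true, j).

(* A two-colored partition: nU upper points, nL lower points, a coloring
   (true = white/circ, false = black/bullet), and the block relation
   (two points are related iff they lie in the same block). *)
Record partition := Partition {
  nU : nat;
  nL : nat;
  col : pt -> bool;
  blk : rel pt
}.

(* All points in the cyclic order: lower row left to right,
   then upper row right to left. *)
Definition pts (p : partition) : seq pt :=
  [seq Lo i | i <- iota 0 (nL p)] ++ [seq Up j | j <- rev (iota 0 (nU p))].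

(* blk is an equivalence relation on the points of p (blocks = classes,
   automatically non-empty and pairwise disjoint). *)
Definition is_partition (p : partition) : Prop :=
  [/\ (forall x y, blk p x y -> (x \in pts p) && (y \in pts p)),
      (forall x, x \in pts p -> blk p x x),
      (forall x y, blk p x y -> blk p y x) &
      (forall x y z, blk p x y -> blk p y z -> blk p x z)].

Definition ncol (p : partition) (x : pt) : bool :=
  if x.1 then ~~ col p x else col p x.

(* ]a,b[ : points strictly after a and strictly before b in cyclic order
   (for a = b: all points other than a). *)
Definition oo (p : partition) (a b : pt) : seq pt :=
  let s := pts p in
  let n := size s in
  let i := index a s in
  let j := index b s in
  let d := ((j + n - i - 1) %% n).+1 in
  [seq nth a s ((i + k) %% n) | k <- iota 1 d.-1].

Definition oc (p : partition) (a b : pt) : seq pt :=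
  if a == b then [::] else rcons (oo p a b) b.

Definition sigma (p : partition) (S : seq pt) : int :=
  \sum_(x <- S) (if ncol p x then 1 else -1).

Definition pair_nb (p : partition) : Prop :=
  is_partition p /\
  forall x, x \in pts p ->
    count (blk p x) (pts p) = 2 /\
    (forall y, blk p x y -> x != y -> ncol p x != ncol p y).

Definition S0 (p : partition) : Prop :=
  pair_nb p /\ forall a b, blk p a b -> a != b -> sigma p (oo p a b) = 0.

Definition delta (p : partition) (a b : pt) : int :=
  if ncol p a != ncol p b then sigma p (oo p a b) else sigma p (oc p a b).

Definition blocks_cross (p : partition) (x y : pt) : Prop :=
  ~~ blk p x y /\
  exists a b c e,
    [/\ blk p x a, blk p x b, blk p y c & blk p y e] /\
    [/\ a != b, c \in oo p a b & e \in oo p b a].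

(* I_D : d_p(B,B') = |delta_p(x,y)| for x in B, y in B' *)
Definition in_ID (D : nat -> Prop) (p : partition) : Prop :=
  S0 p /\
  forall x y, x \in pts p -> y \in pts p -> blocks_cross p x y ->
    ~ D `|delta p x y|%N.

Definition h_id (x : pt) : nat := if x.1 then 2 - x.2 else x.2.
Definition h_part : partition :=
  Partition 3 3 (fun x => x.2 != 1%N)
    (fun x y => [&& x.2 < 3, y.2 < 3 & h_id x == h_id y]).

(* Bracket patterns (represented by a sequence listing their elements) *)
Definition bracket_pattern (w : seq nat) : Prop :=
  w != [::] /\ 0%N \notin w.

Definition bnorm (w : seq nat) : nat := \max_(j <- w) j.

(* A(w) is contained in N0 \ M *)
Definition in_frakW (M : nat -> Prop) (w : seq nat) : Prop :=
  bracket_pattern w /\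
  forall j i, j \in w -> (i < j)%N -> i \notin w -> ~ M (j - i)%N.

(* Br_bullet(w): in each row, position m-k holds b_k (black) and
   position m+1+k holds c_k (white), m = ||w||. *)
Definition br_id (w : seq nat) (x : pt) : nat * nat * bool :=
  let m := bnorm w in
  let c := (m < x.2)%N in
  let k := if c then (x.2 - m.+1)%N else (m - x.2)%N in
  if k \in w then (0%N, k, x.1) else (1%N, k, c).

Definition Br_black (w : seq nat) : partition :=
  let m := bnorm w in
  Partition m.*2.+2 m.*2.+2 (fun x => (m < x.2)%N)
    (fun x y => [&& (x.2 < m.*2.+2)%N, (y.2 < m.*2.+2)%N & br_id w x == br_id w y]).

From Pilot Require Import Defs.
From mathcomp Require Import all_boot all_order all_algebra.
From mathcomp Require Import zify.
From Stdlib Require Import Classical.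
Import GRing.Theory.
Set Implicit Arguments. Unset Strict Implicit. Unset Printing Implicit Defensive.

(* Read the normalized colors along the cyclic order as the steps +1 (white)
   and -1 (black) of a walk.  When the walk is closed, delta_p(a, b) is the
   height of b minus the height of a, so in a partition of S_0 each block
   joins two points of equal height.  In Br_black(w) the four points b_k, c_k,
   b'_k, c'_k of level k all have height k - ||w||; the blocks are the brackets
   {b_k, c_k}, {b'_k, c'_k} for k in w and {b_k, b'_k}, {c_k, c'_k} otherwise,
   and two blocks cross exactly when one is a bracket of a level j in w and the
   other has a level i < j not in w.  So the distances of crossing blocks are
   exactly the elements of A(w), all positive.  In h every point has height 1
   while its blocks cross, so h is in I_D iff 0 is not in D. *)

Lemma Lo_inj : injective Lo. Proof. by move=> i j []. Qed.
Lemma Up_inj : injective Up. Proof. by move=> i j []. Qed.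

Definition cyclic_between (i x j : nat) : bool :=
  if i < j then (i < x) && (x < j) else (i < x) || (x < j).

Section CyclicOrder.

Variable p : Defs.partition.

Local Notation n := (nL p + nU p).

Lemma size_pts : size (pts p) = n.
Proof. by rewrite /pts size_cat !size_map size_rev !size_iota. Qed.

Lemma mem_pts z : (z \in pts p) = (if z.1 then z.2 < nU p else z.2 < nL p).
Proof.
case: z => [[] t]; rewrite /pts mem_cat /=.
  rewrite (_ : (true, t) \in _ = false); last by apply/mapP => -[i _] [].
  by rewrite (mem_map Up_inj) mem_rev mem_iota.
rewrite (_ : (false, t) \in [seq Up j | j <- _] = false); last by apply/mapP => -[i _] [].
by rewrite (mem_map Lo_inj) mem_iota orbF.
Qed.

Lemma uniq_pts : uniq (pts p).
Proof.
rewrite /pts cat_uniq (map_inj_uniq Lo_inj) (map_inj_uniq Up_inj) rev_uniq /=.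
rewrite !iota_uniq andbT /=; apply/hasPn => _ /mapP [j _ ->].
by apply/mapP => -[i _] [].
Qed.

Lemma nth_pts x0 u : u < n ->
  nth x0 (pts p) u = if u < nL p then Lo u else Up (n - 1 - u).
Proof.
move=> lt_u; rewrite /pts nth_cat size_map size_iota; case: ifP => lt_uL.
  by rewrite (nth_map 0) ?size_iota // nth_iota.
rewrite (nth_map 0) ?size_rev ?size_iota; last by lia.
rewrite nth_rev ?size_iota; last by lia.
by rewrite nth_iota; [congr Up|]; lia.
Qed.

Lemma index_pts z : z \in pts p ->
  index z (pts p) = if z.1 then n - 1 - z.2 else z.2.
Proof.
case: z => [s t]; rewrite mem_pts /= => z_in.
have lt_u : (if s then n - 1 - t else t) < n by case: s z_in; lia.
have nth_u : nth (s, t) (pts p) (if s then n - 1 - t else t) = (s, t).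
  by rewrite nth_pts //; case: s z_in lt_u => /= ? ?; case: ifP => ?; congr pair; lia.
by rewrite -{1}nth_u index_uniq ?uniq_pts ?size_pts.
Qed.

Lemma modn_lt2 x : x < n + n -> x %% n = if x < n then x else x - n.
Proof.
case: ifP => [lt_x _|ge_x lt_x]; first by rewrite modn_small.
by rewrite -[in LHS](@subnK n x) ?modnDr ?modn_small //; lia.
Qed.

Lemma mem_oo a b c : a \in pts p -> b \in pts p -> c \in pts p ->
  (c \in oo p a b) = cyclic_between (index a (pts p)) (index c (pts p)) (index b (pts p)).
Proof.
move=> a_in b_in c_in; rewrite /oo /cyclic_between size_pts.
have := index_mem a (pts p); have := index_mem b (pts p); have := index_mem c (pts p).
rewrite a_in b_in c_in size_pts.
set i := index a _; set j := index b _; set x := index c _ => lt_x lt_j lt_i.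
rewrite modn_lt2 /=; last by lia.
apply/mapP/idP => [[k] | between].
  rewrite mem_iota => k_range c_eq.
  have -> : x = (i + k) %% n.
    by rewrite /x c_eq index_uniq ?uniq_pts ?size_pts ?ltn_pmod //; lia.
  by rewrite modn_lt2; move: k_range; repeat case: ifP; lia.
exists (if i < x then x - i else x + n - i).
  by rewrite mem_iota; move: between; repeat case: ifP; lia.
rewrite modn_lt2; last by case: ifP; lia.
by rewrite (_ : (if _ then _ else _) = x) ?nth_index //; repeat case: ifP; lia.
Qed.

End CyclicOrder.

Local Open Scope ring_scope.

Definition ncol_at (p : Defs.partition) (u : nat) : bool := ncol p (nth (Lo 0) (pts p) u).
Definition step (p : Defs.partition) (u : nat) : int := if ncol_at p u then 1 else -1.
Definition walk (p : Defs.partition) (t : nat) : int := \sum_(0 <= u < t) step p u.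
Definition height (p : Defs.partition) (u : nat) : int :=
  walk p u + (if ncol_at p u then 1 else 0).

Section Heights.

Variable p : Defs.partition.

Local Notation n := (nL p + nU p).

Hypothesis walk_closed : walk p n = 0.

Lemma walkS t : walk p t.+1 = walk p t + step p t.
Proof. by rewrite /walk big_nat_recr. Qed.

Lemma sum_step_mod t : \sum_(0 <= u < t) step p (u %% n) = walk p (t %% n).
Proof.
elim: t => [|t IHt]; first by rewrite mod0n /walk !big_geq.
rewrite big_nat_recr //= IHt -walkS.
rewrite (_ : (t.+1 %% n = (t %% n).+1 %% n)%N); last by rewrite -[t.+1]addn1 -modnDml addn1.
case: (posnP n) => [-> | n_gt0]; first by rewrite !modn0.
have := ltn_pmod t n_gt0; rewrite leq_eqVlt => /predU1P [-> | lt_tn].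
  by rewrite modnn walk_closed /walk big_geq.
by rewrite (modn_small lt_tn).
Qed.

Lemma sum_step_mod_nat t1 t2 : (t1 <= t2)%N ->
  \sum_(t1 <= u < t2) step p (u %% n) = walk p (t2 %% n) - walk p (t1 %% n).
Proof.
move=> le_t12; rewrite -!sum_step_mod (big_cat_nat (leq0n t1) le_t12) /=.
by rewrite addrAC subrr add0r.
Qed.

Lemma walk_modS t : (t < n)%N -> walk p (t.+1 %% n) = walk p t.+1.
Proof.
rewrite leq_eqVlt => /predU1P [-> | lt_tn]; last by rewrite modn_small.
by rewrite modnn walk_closed /walk big_geq.
Qed.

Lemma sigma_oo a b : a \in pts p -> b \in pts p ->
  sigma p (oo p a b) = walk p (index b (pts p)) - walk p (index a (pts p)).+1.
Proof.
move=> a_in b_in; have := index_mem a (pts p); have := index_mem b (pts p).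
rewrite a_in b_in /sigma /oo big_map size_pts /=.
set i := index a _; set j := index b _; set L := ((j + n - i - 1) %% n)%N => lt_j lt_i.
rewrite (eq_bigr (fun k => step p ((i + k) %% n))); last first.
  by move=> k _; rewrite /step /ncol_at (set_nth_default (Lo 0)) // size_pts ltn_pmod //; lia.
have -> : \sum_(k <- iota 1 L) step p ((i + k) %% n) = \sum_(i.+1 <= u < i.+1 + L) step p (u %% n).
  by rewrite /index_iota addKn -[i.+1]addn1 iotaDl big_map.
rewrite sum_step_mod_nat ?leq_addr // walk_modS // modnDmr.
by rewrite (_ : (i.+1 + (j + n - i - 1) = j + n)%N) ?modnDr ?modn_small //; lia.
Qed.

Lemma delta_height a b : a \in pts p -> b \in pts p ->
  delta p a b = height p (index b (pts p)) - height p (index a (pts p)).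
Proof.
move=> a_in b_in; rewrite /delta /oc /height /ncol_at !nth_index //.
case: (eqVneq a b) => [<- | neq_ab]; first by rewrite !eqxx /sigma big_nil subrr.
rewrite /sigma big_rcons -/(sigma p _) sigma_oo // walkS /step /ncol_at nth_index //.
by case: (ncol p a); case: (ncol p b) => /=; lia.
Qed.

End Heights.

Lemma kernel_is_partition (p : Defs.partition) (T : eqType) (f : pt -> T) :
  (forall x y, blk p x y = [&& x \in pts p, y \in pts p & f x == f y]) -> is_partition p.
Proof.
move=> blkE; split=> [x y | x x_in | x y | x y z]; rewrite ?blkE.
- by case/and3P=> -> ->.
- by rewrite x_in eqxx.
- by case/and3P=> x_in y_in /eqP fxy; rewrite x_in y_in fxy eqxx.
- case/and3P=> x_in _ /eqP fxy /and3P [_ z_in /eqP fyz].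
  by rewrite x_in z_in fxy fyz eqxx.
Qed.

Lemma count_pair (T : eqType) (P : pred T) s x y : uniq s -> x \in s -> y \in s -> x != y ->
  {in s, forall z, P z = (z == x) || (z == y)} -> count P s = 2%N.
Proof.
move=> uniq_s x_in y_in neq_xy P_xy; rewrite (eq_in_count P_xy).
have := count_predUI (pred1 x) (pred1 y) s.
rewrite (@eq_count _ (predI (pred1 x) (pred1 y)) pred0); last first.
  by move=> z /=; case: (eqVneq z x) => // ->; rewrite (negbTE neq_xy).
rewrite count_pred0 addn0 !count_uniq_mem // x_in y_in => E.
by transitivity (count (predU (pred1 x) (pred1 y)) s); [apply: eq_count | rewrite E].
Qed.

Lemma S0_of_height (p : Defs.partition) :
  pair_nb p -> walk p (nL p + nU p) = 0 ->
  (forall a b, blk p a b -> height p (index a (pts p)) = height p (index b (pts p))) -> S0 p.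
Proof.
move=> pnb closed level; split=> // a b ab neq_ab.
have [[blk_pts _ _ _] pair] := pnb.
have /andP [a_in b_in] := blk_pts a b ab.
have [_ /(_ b ab neq_ab) ncol_ab] := pair a a_in.
by move: (delta_height closed a_in b_in); rewrite /delta ncol_ab (level a b ab) subrr.
Qed.

Section BracketPartition.

Variable w : seq nat.

Local Notation m := (bnorm w).
Local Notation Br := (Br_black w).

Definition Br_level (z : pt) : nat := if (m < z.2)%N then (z.2 - m.+1)%N else (m - z.2)%N.

Definition Br_coord (k : nat) (c : bool) : nat := if c then (m.+1 + k)%N else (m - k)%N.

(* The point of level k <= m that is the end e of the block t of that level;
   in each row b_k has coordinate m - k and c_k has coordinate m + 1 + k. *)
Definition Br_end (k : nat) (t e : bool) : pt :=
  if k \in w then (t, Br_coord k e) else (e, Br_coord k t).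

Lemma br_idE z : br_id w z =
  if Br_level z \in w then (0, Br_level z, z.1)%N else (1, Br_level z, m < z.2)%N.
Proof. by []. Qed.

Lemma mem_Br_pts z : (z \in pts Br) = (z.2 < m.*2.+2)%N.
Proof. by rewrite mem_pts /= if_same. Qed.

Lemma Br_coord_col k c : (m < Br_coord k c)%N = c.
Proof. by case: c; rewrite /Br_coord; lia. Qed.

Lemma Br_coord_level r k c : (k <= m)%N -> Br_level (r, Br_coord k c) = k.
Proof. by rewrite /Br_level /= Br_coord_col /Br_coord; case: c; lia. Qed.

Lemma Br_level_end k t e : (k <= m)%N -> Br_level (Br_end k t e) = k.
Proof. by rewrite /Br_end; case: ifP => _; apply: Br_coord_level. Qed.

Lemma Br_end_in k t e : (k <= m)%N -> Br_end k t e \in pts Br.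
Proof. move=> le_km; rewrite mem_Br_pts /Br_end /Br_coord -mul2n; case: ifP => _; case: t e => [] [] /=; lia. Qed.

Lemma Br_endP z : z \in pts Br -> exists k t e, (k <= m)%N /\ z = Br_end k t e.
Proof.
case: z => [r x]; rewrite mem_Br_pts -mul2n /= => lt_x.
have -> : (r, x) = (r, Br_coord (Br_level (r, x)) (m < x)%N).
  by rewrite /Br_coord /Br_level /=; case: (ltnP m x) => ?; congr pair; lia.
set k := Br_level _; have le_km : (k <= m)%N by rewrite /k /Br_level /=; case: ifP; lia.
exists k; rewrite /Br_end; case: (k \in w); [exists r, (m < x)%N | exists (m < x)%N, r]; by [].
Qed.

Lemma br_id_end k t e : (k <= m)%N ->
  br_id w (Br_end k t e) = (if k \in w then 0 else 1, k, t)%N.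
Proof.
move=> le_km; rewrite br_idE Br_level_end // /Br_end.
by case: ifP => k_w; rewrite k_w ?Br_coord_col.
Qed.

Lemma Br_end_eq k k' t t' e e' : (k <= m)%N -> (k' <= m)%N ->
  (Br_end k t e == Br_end k' t' e') = [&& k == k', t == t' & e == e'].
Proof.
move=> le_km le_k'm; case: (eqVneq k k') => [<- | neq_k] /=.
  rewrite /Br_end /Br_coord; case: ifP => _; rewrite xpair_eqE;
    by case: t t' e e' => [] [] [] [] /=; rewrite ?eqxx //; lia.
apply/negbTE; apply: contra neq_k => /eqP /(congr1 Br_level).
by rewrite !Br_level_end // => ->.
Qed.

Lemma blk_Br x y : blk Br x y = [&& x \in pts Br, y \in pts Br & br_id w x == br_id w y].
Proof. by rewrite !mem_Br_pts. Qed.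

Lemma blk_Br_end k k' t t' e e' : (k <= m)%N -> (k' <= m)%N ->
  blk Br (Br_end k t e) (Br_end k' t' e') = (k == k') && (t == t').
Proof.
move=> le_km le_k'm; rewrite blk_Br !Br_end_in // !br_id_end // !xpair_eqE.
by case: (eqVneq k k') => [<- | _]; rewrite ?eqxx ?andbF.
Qed.

Lemma ncol_Br_end k t e : ncol Br (Br_end k t e) = t (+) e.
Proof. by rewrite /ncol /Br_end; case: (k \in w) => /=; rewrite Br_coord_col; case: t e => [] []. Qed.

Lemma pair_nb_Br : pair_nb Br.
Proof.
split; first exact: (kernel_is_partition (f := br_id w) blk_Br).
move=> x /Br_endP [k [t [e [le_km ->]]]]; split.
  apply: (count_pair (x := Br_end k t e) (y := Br_end k t (~~ e))); rewrite ?uniq_pts ?Br_end_in //.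
    by rewrite Br_end_eq // !eqxx; case: e.
  move=> z /Br_endP [k' [t' [e' [le_k'm ->]]]].
  rewrite blk_Br_end // !Br_end_eq // [k == _]eq_sym [t == _]eq_sym.
  by case: (k' == k); case: (t' == t); case: e e' => [] [].
move=> y blk_xy; have := blk_xy; rewrite blk_Br => /and3P [_ /Br_endP [k' [t' [e' [le_k'm y_eq]]]] _].
move: blk_xy; rewrite {}y_eq blk_Br_end // Br_end_eq // !ncol_Br_end.
by case/andP=> /eqP <- /eqP <-; rewrite !eqxx; case: t e e' => [] [] [].
Qed.

Definition Br_walk (u : nat) : int :=
  if (u <= m.+1)%N then - u%:Z
  else if (u <= m.*2.+2)%N then u%:Z - (m.*2.+2)%:Z
  else if (u <= 3 * m + 3)%N then (m.*2.+2)%:Z - u%:Z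
  else u%:Z - (4 * m + 4)%:Z.

Lemma ncol_at_Br u : (u < m.*2.+2 + m.*2.+2)%N ->
  ncol_at Br u = if (u < m.*2.+2)%N then (m < u)%N else ~~ (m < m.*2.+2 + m.*2.+2 - 1 - u)%N.
Proof. by move=> lt_u; rewrite /ncol_at nth_pts //=; case: ifP. Qed.

Lemma walk_Br u : (u <= m.*2.+2 + m.*2.+2)%N -> walk Br u = Br_walk u.
Proof.
elim: u => [|u IHu] le_u; first by rewrite /walk big_geq.
rewrite walkS IHu 1?ltnW // /step ncol_at_Br // /Br_walk -!mul2n.
by case: (ltnP u (2 * m).+2) => ?; repeat case: ifP; lia.
Qed.

Lemma walk_Br_closed : walk Br (nL Br + nU Br) = 0.
Proof. by rewrite walk_Br // /Br_walk /= -!mul2n; repeat case: ifP; lia. Qed.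

Lemma height_Br z : z \in pts Br -> height Br (index z (pts Br)) = (Br_level z)%:Z - m%:Z.
Proof.
case: z => [r x] z_in; have lt_x : (x < m.*2.+2)%N by rewrite mem_Br_pts in z_in.
rewrite /height index_pts // {z_in} /= walk_Br; last by case: r; lia.
rewrite ncol_at_Br; last by case: r; lia.
rewrite /Br_walk /Br_level /= -!mul2n; case: r; repeat case: ifP; lia.
Qed.

Lemma delta_Br a b : a \in pts Br -> b \in pts Br ->
  delta Br a b = (Br_level b)%:Z - (Br_level a)%:Z.
Proof.
move=> a_in b_in; rewrite delta_height ?walk_Br_closed // !height_Br //.
by rewrite opprB addrA subrK.
Qed.

Lemma Br_level_br_id a b : br_id w a = br_id w b -> Br_level a = Br_level b.
Proof. by rewrite !br_idE; case: ifP; case: ifP => _ _ []. Qed.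

Lemma S0_Br : S0 Br.
Proof.
apply: S0_of_height pair_nb_Br walk_Br_closed _ => a b ab.
move: ab; rewrite blk_Br => /and3P [a_in b_in /eqP /Br_level_br_id].
by rewrite !height_Br // => ->.
Qed.

(* The ends of level k sit at positions m - k, m + 1 + k, 3m + 2 - k and
   3m + 3 + k of the cyclic order. *)
Lemma Br_chords_cross k k' t t' e c c' : (k <= m)%N -> (k' <= m)%N ->
  Br_end k' t' c \in oo Br (Br_end k t e) (Br_end k t (~~ e)) ->
  Br_end k' t' c' \in oo Br (Br_end k t (~~ e)) (Br_end k t e) ->
  [&& k \in w, k' \notin w & (k' < k)%N] || [&& k' \in w, k \notin w & (k < k')%N].
Proof.
move=> le_km le_k'm; rewrite !mem_oo ?Br_end_in // !index_pts ?Br_end_in //.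
rewrite /Br_end /Br_coord /cyclic_between /= -!mul2n.
case: (k \in w); case: (k' \in w); case: t t' e c c' => [] [] [] [] [] /=;
  repeat case: ifP; lia.
Qed.

Lemma blk_Br_end_mate k t e z : (k <= m)%N -> blk Br (Br_end k t e) z -> exists e', z = Br_end k t e'.
Proof.
move=> le_km blk_z; have := blk_z; rewrite blk_Br => /and3P [_ /Br_endP [k' [t' [e' [le_k'm z_eq]]]] _].
move: blk_z; rewrite {}z_eq blk_Br_end // => /andP [/eqP <- /eqP <-].
by exists e'.
Qed.

Lemma bnorm_ge j : j \in w -> (j <= m)%N.
Proof. by move=> j_w; rewrite /bnorm (leq_bigmax_seq (F := id) j). Qed.

Lemma in_ID_Br (D : nat -> Prop) :
  in_ID D Br <-> forall j i, j \in w -> (i < j)%N -> i \notin w -> ~ D (j - i)%N.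
Proof.
split=> [[_ noD] j i j_w lt_ij i_w Dji | noD].
  have le_jm := bnorm_ge j_w; have le_im : (i <= m)%N by lia.
  apply: (noD (Br_end j false false) (Br_end i false false)); rewrite ?Br_end_in //.
    split; first by rewrite blk_Br_end // (gtn_eqF lt_ij).
    exists (Br_end j false false), (Br_end j false true), (Br_end i false false), (Br_end i false true).
    rewrite !blk_Br_end // Br_end_eq // !eqxx !mem_oo ?Br_end_in // !index_pts ?Br_end_in //.
    rewrite /Br_end j_w (negbTE i_w) /Br_coord /cyclic_between /= -!mul2n.
    by split=> //; split=> //; repeat case: ifP; lia.
  by rewrite delta_Br ?Br_end_in // !Br_level_end // distnEr // ltnW.
split=> [|x y x_in y_in [_ [a [b [c [e [[xa xb yc ye] [neq_ab c_in e_in]]]]]]]].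
  exact: S0_Br.
have [k [t [ex [le_km x_eq]]]] := Br_endP x_in; have [k' [t' [ey [le_k'm y_eq]]]] := Br_endP y_in.
rewrite x_eq in xa xb; rewrite y_eq in yc ye.
have [ea a_eq] := blk_Br_end_mate le_km xa; have [eb b_eq] := blk_Br_end_mate le_km xb.
have [ec c_eq] := blk_Br_end_mate le_k'm yc; have [ee e_eq] := blk_Br_end_mate le_k'm ye.
have eb_eq : eb = ~~ ea.
  move: neq_ab; rewrite a_eq b_eq Br_end_eq // !eqxx; by case: (ea); case: (eb).
move: c_in e_in; rewrite a_eq b_eq c_eq e_eq eb_eq => c_in e_in.
rewrite delta_Br // x_eq y_eq !Br_level_end //.
case/orP: (Br_chords_cross le_km le_k'm c_in e_in) => /and3P [in_w notin_w lt_k].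
  by rewrite distnEr ?(ltnW lt_k) //; exact: noD.
by rewrite distnEl ?(ltnW lt_k) //; exact: noD.
Qed.

End BracketPartition.

Lemma mem_h_pts x : (x \in pts h_part) = (x.2 < 3)%N.
Proof. by rewrite mem_pts /= if_same. Qed.

Lemma h_pts_ind (P : pt -> Prop) :
  P (Lo 0) -> P (Lo 1) -> P (Lo 2) -> P (Up 0) -> P (Up 1) -> P (Up 2) ->
  forall x, x \in pts h_part -> P x.
Proof. by move=> ? ? ? ? ? ? [[] [|[|[|t]]]]; rewrite mem_h_pts. Qed.

Lemma pair_nb_h : pair_nb h_part.
Proof.
split; first by apply: (kernel_is_partition (f := h_id)) => x y; rewrite !mem_h_pts.
by apply: h_pts_ind; (split; [vm_compute | move=> [[] [|[|[|t]]]]]).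
Qed.

Lemma walk_h_closed : walk h_part (nL h_part + nU h_part) = 0.
Proof. by rewrite /walk unlock; vm_compute. Qed.

Lemma height_h u : (u < nL h_part + nU h_part)%N -> height h_part u = 1.
Proof. by case: u => [|[|[|[|[|[|u]]]]]] //; rewrite /height /walk unlock; vm_compute. Qed.

Lemma delta_h x y : x \in pts h_part -> y \in pts h_part -> delta h_part x y = 0.
Proof.
move=> x_in y_in; rewrite delta_height ?walk_h_closed //.
by rewrite !height_h ?subrr // -size_pts index_mem.
Qed.

Lemma S0_h : S0 h_part.
Proof.
apply: S0_of_height pair_nb_h walk_h_closed _ => a b /and3P [a_in b_in _].
by rewrite !height_h // -size_pts index_mem mem_h_pts.
Qed.

Lemma in_ID_h (D : nat -> Prop) : in_ID D h_part <-> ~ D 0%N.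
Proof.
split=> [[_ noD] D0 | notD0]; last first.
  by split=> [|x y x_in y_in _]; [exact: S0_h | rewrite delta_h].
apply: (noD (Lo 0) (Lo 1)) => //; last by rewrite delta_h.
by split=> //; exists (Lo 0), (Up 2), (Lo 1), (Up 1); vm_compute.
Qed.

Theorem lemma8p1 (D : nat -> Prop)
  (HD : forall a b : nat, D a -> D b -> D (a + b)%N) :
  (~ in_ID D h_part <-> D 0%N) /\
  (forall w : seq nat,
     (bracket_pattern w /\ in_ID D (Br_black w)) <->
     in_frakW (fun n => n = 0%N \/ D n) w).
Proof.
split; first by rewrite in_ID_h; split=> [/NNPP | D0 notD0].
move=> w; rewrite in_ID_Br; split=> [[w_bp noD] | [w_bp noM]]; split=> // j i j_w lt_ij i_w.
  by case=> [/eqP | ]; [rewrite subn_eq0 leqNgt lt_ij | exact: noD].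
by move=> Dji; apply: (noM j i) => //; right.
Qed.
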